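(* Let $(d_1,d_2)\in\mathbb N^2$, let $(a,b)\in\mathbb N^2$ be coprime and $k\ge1$ an integer, with $b>0$ and $d_2>0$. If \[ \frac{kab+1}{kb^2}\ge\frac{d_1}{d_2}>\frac ab\qquad\text{or}\qquad\frac{ka^2}{kab+1}\le\frac{d_1}{d_2}<\frac ab, \] then $(d_1,d_2)$ and $(ka,kb)$ satisfy the one-bending property.
   Context: Rank-2 scattering diagram: $\Bbbk$ a field of characteristic $0$, $M=\mathbb Z^2$ with basis $e_1,e_2$, $N=\operatorname{Hom}(M,\mathbb Z)$; positive integers $\ell_1,\ell_2$; independent variables $p_{i,k}$ ($i=1,2$, $1\le k\le\ell_i$); $\mathcal M$ the monoid of monomials in them; $\widehat R$ the completion of $\Bbbk[\mathcal M][x^{\pm1},y^{\pm1}]$ at the ideal generated by the $p_{i,k}$; $x^{(m_1,m_2)}=x^{m_1}y^{m_2}$. Walls: rays $b-\mathbb R_{\ge0}m_0$ or lines $b-\mathbb Rm_0$ ($m_0$ primitive) with functions $1+\sum_{k\ge1}c_kx^{km_0}$, $c_k$ in that ideal; crossing with velocity $v$ acts by $x^m\mapsto x^mf^{\langle n,m\rangle}$ ($n\in N$ primitive orthogonal to the wall, $\langle n,v\rangle<0$); consistency: trivial path-ordered products around regular loops. $\mathfrak D=\operatorname{Scat}(P_1,P_2)$, $P_1=1+\sum_{k=1}^{\ell_1}p_{1,k}x^k$, $P_2=1+\sum_{k=1}^{\ell_2}p_{2,k}y^k$: the consistent diagram (unique up to equivalence) consisting of the lines $(\mathbb Re_1,P_1)$,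 $(\mathbb Re_2,P_2)$ and rays, chosen with rays $\mathbb R_{\le0}(a,b)$ for distinct coprime $(a,b)\in\mathbb Z_{>0}^2$. A broken line for $m_0\in M\setminus\{0\}$ with endpoint $Q$ is a continuous piecewise linear $\beta:(-\infty,0]\to\mathbb R^2$ avoiding ray endpoints and wall intersection points, with breakpoints $\tau_1<\dots<\tau_\ell<0$ and monomials $c_ix^{m_i}$ on the linear pieces, $c_0=1$, $\beta(0)=Q$, $\dot\beta=-m_i$ on the $i$-th piece, transversal crossing at breakpoints, and $c_ix^{m_i}$ a term different from $c_{i-1}x^{m_{i-1}}$ of $c_{i-1}x^{m_{i-1}}\prod_{\mathfrak d\ni\beta(\tau_i)}f_{\mathfrak d}^{\langle n,m_{i-1}\rangle}$ ($n$ primitive normal with $\langle n,m_{i-1}\rangle>0$); it bends at the $\beta(\tau_i)$, its initial exponent is $m_0$ and final exponent $m_\ell$. One-bending property: for $(d_1,d_2)\in\mathbb N^2$, coprime $(a,b)\in\mathbb N^2$ with $d_1b-d_2a\ne0$ and $k\ge1$, $(d_1,d_2)$ and $(ka,kb)$ satisfy the one-bending property if every broken line in $\mathfrak D$ with initial exponent $(-d_1,-d_2)$, final exponent $(ka-d_1,kb-d_2)$, and no bend on the positive $x$-axis or positive $y$-axis, has exactly one bend. *)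

From HB Require Import structures.
From mathcomp Require Import all_boot all_order all_algebra.
From mathcomp Require Import reals.
From mathcomp Require Import mpoly.

Set Implicit Arguments.
Unset Strict Implicit.
Unset Printing Implicit Defensive.

Import Order.TTheory GRing.Theory Num.Theory.
Local Open Scope ring_scope.

(* Coefficients.  The variables p_{i,k} are numbered 0 .. l1+l2-1 :         *)
(*   p_{1,k} |-> k-1        (1 <= k <= l1)                                   *)
(*   p_{2,k} |-> l1 + k-1   (1 <= k <= l2)                                   *)
(* k[M] = {mpoly k[n]}, its completion at the ideal (p) is the ring of       *)
(* formal power series, represented by its coefficient function.           *)

Definition ps (k : fieldType) (n : nat) := 'X_{1..n} -> k.

(* the j-th variable (0 if j >= n) *)
Definition pX (k : fieldType) (n j : nat) : {mpoly k[n]} :=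
  \sum_(i < n | val i == j) 'X_i.

Arguments pX : clear implicits.

Definition ps_of (k : fieldType) (n : nat) (q : {mpoly k[n]}) : ps k n :=
  fun al => q@_al.

Definition ps1 (k : fieldType) (n : nat) : ps k n :=
  fun al => if al == 0%MM then 1 else 0.

Arguments ps1 : clear implicits.

Definition ps_nonzero (k : fieldType) (n : nat) (s : ps k n) : Prop :=
  exists al, s al != 0.

(* truncation modulo I^N, I = (p_{i,k}) *)
Definition trunc (k : fieldType) (n : nat) (N : nat) (s : ps k n) : {mpoly k[n]} :=
  \sum_(m : 'X_{1..n < N}) s m *: 'X_[m].

Definition psmul (k : fieldType) (n : nat) (s t : ps k n) : ps k n :=
  fun al => (trunc (mdeg al).+1 s * trunc (mdeg al).+1 t)@_al.

(* A wall function 1 + sum_{j>=1} g j x^{j m0} is encoded by g : nat -> ps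
   (g 0 is ignored).  [wcoef g e j] is the coefficient of x^{j m0} in
   (1 + sum_{j>=1} g j x^{j m0}) ^ e, as a power series in the p's. *)
Definition wcoef (k : fieldType) (n : nat) (g : nat -> ps k n) (e j : nat)
  : ps k n :=
  fun al =>
    ((1 + \sum_(1 <= i < j.+1) (trunc (mdeg al).+1 (g i))%:P * 'X^i) ^+ e)`_j
      @_al.

(* coefficient sequences of P1 = 1 + sum p_{1,i} x^i and P2 = 1 + sum p_{2,i} y^i *)
Definition gP1 (k : fieldType) (l1 l2 : nat) : nat -> ps k (l1 + l2) :=
  fun i => ps_of (if (0 < i <= l1)%N then pX k (l1 + l2) i.-1 else 0).

Definition gP2 (k : fieldType) (l1 l2 : nat) : nat -> ps k (l1 + l2) :=
  fun i => ps_of (if (0 < i <= l2)%N then pX k (l1 + l2) (l1 + i.-1) else 0).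

Arguments gP1 : clear implicits.
Arguments gP2 : clear implicits.

(* The diagram.  The lines (R e1, P1), (R e2, P2) and, for every coprime     *)
(* (a,b) in Z_{>0}^2, the ray R_{<=0}(a,b) with function                     *)
(*    f_{(a,b)} = 1 + sum_{j>=1} F a b j x^{j(a,b)}                           *)
(* (a ray with all F a b j = 0 is the trivial wall, i.e. no wall).           *)

Definition coprime_pos (a b : nat) : bool := [&& 0 < a, 0 < b & coprime a b]%N.

Definition bound_ok (k : fieldType) (n : nat) (F : nat -> nat -> nat -> ps k n)
  (N B : nat) : Prop :=
  forall a b j, coprime_pos a b -> (0 < j)%N -> (B < j * (a + b))%N ->
    forall al : 'X_{1..n}, (mdeg al < N)%N -> F a b j al = 0.

(* Laurent-free model of R^ / I^N: the relevant automorphisms preserve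
   k[p][x,y]; B := {mpoly {mpoly k[n]}[2]}, x = 'X_0, y = 'X_1.            *)
Definition mx (k : fieldType) (n : nat) : {mpoly {mpoly k[n]}[2]} :=
  'X_(@Ordinal 2 0 isT).
Definition my (k : fieldType) (n : nat) : {mpoly {mpoly k[n]}[2]} :=
  'X_(@Ordinal 2 1 isT).

Arguments mx : clear implicits.
Arguments my : clear implicits.

Definition wfun (k : fieldType) (n : nat) (g : nat -> ps k n) (a b N J : nat)
  : {mpoly {mpoly k[n]}[2]} :=
  1 + \sum_(1 <= j < J.+1)
        trunc N (g j) *: (mx k n ^+ (j * a) * my k n ^+ (j * b)).

(* inverse modulo I^N of a function f = 1 mod I *)
Definition inv_mod (k : fieldType) (n : nat) (N : nat)
  (f : {mpoly {mpoly k[n]}[2]}) : {mpoly {mpoly k[n]}[2]} :=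
  \sum_(r < N) (1 - f) ^+ r.

Definition zpow (k : fieldType) (n : nat) (N : nat)
  (f : {mpoly {mpoly k[n]}[2]}) (e : int) : {mpoly {mpoly k[n]}[2]} :=
  match e with
  | Posz m => f ^+ m
  | Negz m => inv_mod N f ^+ m.+1
  end.

(* A crossing of a wall with function f and normal nv (primitive, orthogonal
   to the wall, <nv, velocity> < 0): x^m |-> x^m f^<nv,m>.  It is recorded by
   the images of x and y. *)
Definition crossing (k : fieldType) (n : nat) (N : nat)
  (f : {mpoly {mpoly k[n]}[2]}) (nv : int * int)
  : {mpoly {mpoly k[n]}[2]} * {mpoly {mpoly k[n]}[2]} :=
  (mx k n * zpow N f nv.1, my k n * zpow N f nv.2).

(* the coprime (a,b) with 1 <= a,b <= B, by increasing slope b/a, i.e. in the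
   order in which a counterclockwise loop crosses the rays R_{<=0}(a,b) *)
Definition rays_upto (B : nat) : seq (nat * nat) :=
  sort (fun u v : nat * nat => (u.2 * v.1 <= v.2 * u.1)%N)
    [seq ab <- [seq (a, b) | a <- iota 1 B, b <- iota 1 B]
       | coprime_pos ab.1 ab.2].

(* the walls crossed, in order, by a small counterclockwise loop around the
   origin starting just below the positive x-axis *)
Definition loop_crossings (k : fieldType) (l1 l2 : nat)
  (F : nat -> nat -> nat -> ps k (l1 + l2)) (N B : nat)
  : seq ({mpoly {mpoly k[l1 + l2]}[2]} * (int * int)) :=
  let P1 := wfun (gP1 k l1 l2) 1 0 N l1 in
  let P2 := wfun (gP2 k l1 l2) 0 1 N l2 in
  [:: (P1, (0%Z, (-1)%Z)); (P2, (1%Z, 0%Z)); (P1, (0%Z, 1%Z))]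
  ++ [seq (wfun (F ab.1 ab.2) ab.1 ab.2 N B, ((- (ab.2%:Z))%R, ab.1%:Z))
       | ab <- rays_upto B]
  ++ [:: (P2, ((-1)%Z, 0%Z))].

(* path-ordered product theta_r o ... o theta_1, given by images of x, y *)
Definition path_product (k : fieldType) (l1 l2 : nat)
  (F : nat -> nat -> nat -> ps k (l1 + l2)) (N B : nat)
  : {mpoly {mpoly k[l1 + l2]}[2]} * {mpoly {mpoly k[l1 + l2]}[2]} :=
  foldl (fun im fnv =>
           let t := crossing N fnv.1 fnv.2 in
           (im.1 \mPo [tuple t.1; t.2], im.2 \mPo [tuple t.1; t.2]))
        (mx k (l1 + l2), my k (l1 + l2)) (loop_crossings F N B).

Definition eqmod (k : fieldType) (n : nat) (N : nat)
  (P Q : {mpoly {mpoly k[n]}[2]}) : Prop :=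
  forall (m : 'X_{1..2}) (al : 'X_{1..n}), (mdeg al < N)%N ->
    (P@_m)@_al = (Q@_m)@_al.

(* F describes Scat(P1,P2): a scattering diagram (coefficients in the ideal,
   finitely many nontrivial walls modulo each I^N) which is consistent. *)
Definition is_Scat (k : fieldType) (l1 l2 : nat)
  (F : nat -> nat -> nat -> ps k (l1 + l2)) : Prop :=
  [/\ (forall a b j, coprime_pos a b -> (0 < j)%N -> F a b j 0%MM = 0),
      (forall N, exists B, bound_ok F N B) &
      (forall N B, bound_ok F N B ->
         eqmod N (path_product F N B).1 (mx _ _) /\
         eqmod N (path_product F N B).2 (my _ _))].

Inductive wall := Line1 | Line2 | Ray of nat & nat.

Definition on_wall (R : realType) (w : wall) (q : R * R) : Prop :=
  match w with
  | Line1 => q.2 = 0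
  | Line2 => q.1 = 0
  | Ray a b => coprime_pos a b /\
               exists s : R, 0 <= s /\ q = (- (s * a%:R), - (s * b%:R))
  end.

Definition wall_dir (w : wall) : int * int :=
  match w with
  | Line1 => (1%Z, 0%Z)
  | Line2 => (0%Z, 1%Z)
  | Ray a b => (a%:Z, b%:Z)
  end.

Definition wall_g (k : fieldType) (l1 l2 : nat)
  (F : nat -> nat -> nat -> ps k (l1 + l2)) (w : wall) : nat -> ps k (l1 + l2) :=
  match w with
  | Line1 => gP1 k l1 l2
  | Line2 => gP2 k l1 l2
  | Ray a b => F a b
  end.

(* |<n, m>| for n a primitive normal vector to the wall *)
Definition wall_pair (w : wall) (m : int * int) : nat :=
  absz ((wall_dir w).1 * m.2 - (wall_dir w).2 * m.1)%R.

(* the bending rule at a point q: c' x^{m'} is a term, different from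
   c x^m, of  c x^m f_w^{<n,m>}  where w is the wall through q and
   <n,m> > 0 (transversal crossing) *)
Definition bend_ok (R : realType) (k : fieldType) (l1 l2 : nat)
  (F : nat -> nat -> nat -> ps k (l1 + l2)) (q : R * R)
  (m : int * int) (c : ps k (l1 + l2)) (m' : int * int) (c' : ps k (l1 + l2))
  : Prop :=
  exists (w : wall) (j : nat),
    [/\ on_wall w q, (0 < wall_pair w m)%N /\ (0 < j)%N,
        m' = (m.1 + j%:Z * (wall_dir w).1, m.2 + j%:Z * (wall_dir w).2),
        c' = psmul c (wcoef (wall_g F w) (wall_pair w m) j) &
        ps_nonzero c'].

(* t lies in the closure of the i-th linear piece (i = 0 .. size tau) *)
Definition in_piece (R : realType) (tau : seq R) (i : nat) (t : R) : Prop :=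
  [/\ t <= 0,
      (i = 0%N \/ nth 0 tau i.-1 <= t) &
      (i = size tau \/ t <= nth 0 tau i)].

(* beta : (-oo,0] -> R^2 (values for t > 0 are irrelevant) is a broken line
   for m0 with endpoint Q, breakpoints tau, exponents ms = [m_0;..;m_l] and
   coefficients cs = [c_0;..;c_l]. *)
Definition broken_line (R : realType) (k : fieldType) (l1 l2 : nat)
  (F : nat -> nat -> nat -> ps k (l1 + l2)) (m0 : int * int) (Q : R * R)
  (beta : R -> R * R) (tau : seq R) (ms : seq (int * int))
  (cs : seq (ps k (l1 + l2))) : Prop :=
  [/\ m0 <> (0%Z, 0%Z),
      [/\ size ms = (size tau).+1, size cs = (size tau).+1,
          nth m0 ms 0 = m0 & nth (ps1 _ _) cs 0 = ps1 _ _],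
      [/\ sorted <%R tau, all (fun t => t < 0) tau & beta 0 = Q],
      (forall i t s, (i <= size tau)%N -> in_piece tau i t -> in_piece tau i s ->
         beta t = ((beta s).1 - (t - s) * (nth m0 ms i).1%:~R,
                   (beta s).2 - (t - s) * (nth m0 ms i).2%:~R)) &
      (* avoids ray endpoints and intersection points of walls (= origin) *)
      (forall t, t <= 0 -> beta t <> (0, 0)) /\
      (forall i, (i < size tau)%N ->
         bend_ok F (beta (nth 0 tau i))
           (nth m0 ms i) (nth (ps1 _ _) cs i)
           (nth m0 ms i.+1) (nth (ps1 _ _) cs i.+1))].

Definition one_bending (R : realType) (k : fieldType) (l1 l2 : nat)
  (F : nat -> nat -> nat -> ps k (l1 + l2)) (d1 d2 a b kk : nat) : Prop :=
  forall (Q : R * R) (beta : R -> R * R) (tau : seq R) (ms : seq (int * int))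
         (cs : seq (ps k (l1 + l2))),
    broken_line F (- (d1%:Z), - (d2%:Z)) Q beta tau ms cs ->
    last (- (d1%:Z), - (d2%:Z)) ms
      = ((kk * a)%:Z - d1%:Z, (kk * b)%:Z - d2%:Z) ->
    (forall i, (i < size tau)%N ->
       ~ ((beta (nth 0 tau i)).2 = 0 /\ 0 < (beta (nth 0 tau i)).1) /\
       ~ ((beta (nth 0 tau i)).1 = 0 /\ 0 < (beta (nth 0 tau i)).2)) ->
    size tau = 1%N.

From HB Require Import structures.
From mathcomp Require Import all_boot all_order all_algebra.
From mathcomp Require Import reals.
From mathcomp Require Import mpoly.
From mathcomp Require Import zify ring lra.

(* Off the positive half-axes, every wall of Scat(P1,P2) lies along -u for
   some u in the closed first quadrant, and bending on it adds a positive
   multiple of u to the exponent.  Write m_i for the exponents of a broken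
   line and u_i := m_{i+1} - m_i.  The straight segment between two
   consecutive bends has velocity -m_{i+1}; this forces all det(u_i, m_i) to
   have the same sign and the u_i to turn monotonically in that direction.
   With two bends or more, u_0 <= k(a,b) would then lie strictly between
   (d1,d2) = -m_0 and k(a,b) = m_l - m_0.  The slope hypothesis excludes
   this: a slope p/q <> a/b with q <= kb differs from a/b by at least
   1/(kb^2) (and symmetrically with the coordinates swapped).  With no bend
   at all the exponent could not change. *)

Set Implicit Arguments.
Unset Strict Implicit.
Unset Printing Implicit Defensive.

Import Order.TTheory GRing.Theory Num.Theory.
Local Open Scope ring_scope.

Definition cross (u v : int * int) : int := u.1 * v.2 - u.2 * v.1.

Definition in_quadrant (u : int * int) : bool :=
  [&& 0 <= u.1, 0 <= u.2 & 0 < u.1 + u.2].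

Definition ray_point (R : pzRingType) (s : R) (u : int * int) : R * R :=
  (- (s * u.1%:~R), - (s * u.2%:~R)).

Definition jump (m : nat -> int * int) (i : nat) : int * int := m i.+1 - m i.

Lemma ler_nat_frac (R : numFieldType) (x y z w : nat) :
  (0 < y)%N -> (0 < w)%N ->
  (x%:R / y%:R <= z%:R / w%:R :> R) = (x * w <= z * y)%N.
Proof.
move=> y_gt0 w_gt0; rewrite ler_pdivrMr ?ltr0n // mulrAC ler_pdivlMr ?ltr0n //.
by rewrite -!natrM ler_nat.
Qed.

Lemma ltr_nat_frac (R : numFieldType) (x y z w : nat) :
  (0 < y)%N -> (0 < w)%N ->
  (x%:R / y%:R < z%:R / w%:R :> R) = (x * w < z * y)%N.
Proof.
move=> y_gt0 w_gt0; rewrite ltr_pdivrMr ?ltr0n // mulrAC ltr_pdivlMr ?ltr0n //.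
by rewrite -!natrM ltr_nat.
Qed.

Lemma pmul_sign_trans (R : realDomainType) (x y z : R) :
  0 < x * y -> 0 < y * z -> 0 < x * z.
Proof. by move=> *; nra. Qed.

Lemma crossDr (u v w : int * int) : cross u (v + w) = cross u v + cross u w.
Proof. by rewrite /cross /=; ring. Qed.

Lemma crossvv (u : int * int) : cross u u = 0.
Proof. by rewrite /cross mulrC subrr. Qed.

Lemma cross_quadrant_trans (x y z : int * int) :
  in_quadrant x -> in_quadrant y -> in_quadrant z ->
  0 < cross x y -> 0 < cross y z -> 0 < cross x z.
Proof.
case: x y z => [x1 x2] [y1 y2] [z1 z2] /and3P[x1_ge0 x2_ge0 x_gt0].
move=> /and3P[_ _ y_gt0] /and3P[z1_ge0 z2_ge0 z_gt0] xy_gt0 yz_gt0.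
(* Plücker identity: [x,z] y = [x,y] z + [y,z] x, summed over both coordinates. *)
have plucker : cross (x1, x2) (z1, z2) * (y1 + y2) =
    cross (x1, x2) (y1, y2) * (z1 + z2) + cross (y1, y2) (z1, z2) * (x1 + x2).
  by rewrite /cross /=; ring.
have : 0 < cross (x1, x2) (z1, z2) * (y1 + y2).
  by rewrite plucker addr_gt0 // mulr_gt0.
by rewrite pmulr_lgt0.
Qed.

Lemma signed_cross_quadrant_trans (e : int) (x y z : int * int) :
  in_quadrant x -> in_quadrant y -> in_quadrant z ->
  0 < e * cross x y -> 0 < e * cross y z -> 0 < e * cross x z.
Proof.
move=> qx qy qz; have [e_gt0|e_lt0|->] := ltrgt0P e; last by rewrite !mul0r.
  by rewrite !pmulr_rgt0 //; apply: cross_quadrant_trans.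
have crossC u v : cross u v = - cross v u by rewrite /cross; ring.
rewrite !nmulr_rgt0 // [cross x y]crossC [cross y z]crossC [cross x z]crossC.
rewrite !oppr_lt0 => xy yz; exact: cross_quadrant_trans yz xy.
Qed.
Lemma no_lattice_slope_above (d1 d2 a b kk p q : int) :
  0 < d2 -> 0 < b -> 0 <= p -> 0 <= q -> q <= kk * b ->
  0 < (q * d1 - p * d2) * (p * b - q * a) ->
  a * d2 < d1 * b -> d1 * (kk * b ^+ 2) <= (kk * a * b + 1) * d2 -> False.
Proof.
move=> d2_gt0 b_gt0 p_ge0 q_ge0 q_le sep above near.
have [qd_gt0|qd_le0] := ltrP 0 (q * d1 - p * d2); last first.
  have pb_lt0 : p * b - q * a < 0 by nia.
  have q_gt0 : 0 < q by nia.
  nia.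
have pb_ge1 : 1 <= p * b - q * a by move: sep; rewrite pmulr_rgt0 //; lia.
(* d1/d2 - a/b > p/q - a/b >= 1/(qb), while d1/d2 - a/b <= 1/(kk b^2). *)
have far : d2 < q * (d1 * b - a * d2).
  have -> : q * (d1 * b - a * d2) = (p * b - q * a) * d2 + b * (q * d1 - p * d2).
    by ring.
  nia.
have close : kk * b * (d1 * b - a * d2) <= d2.
  have -> : kk * b * (d1 * b - a * d2) =
      d1 * (kk * b ^+ 2) - (kk * a * b + 1) * d2 + d2 by ring.
  lia.
have : 0 < d1 * b - a * d2 by lia.
nia.
Qed.

Lemma no_lattice_vector_between (d1 d2 a b kk : int) (u : int * int) :
  0 <= d1 -> 0 < d2 -> 0 < b -> 0 < kk ->
  0 <= u.1 <= kk * a -> 0 <= u.2 <= kk * b ->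
  cross u (d1, d2) * cross u (a, b) < 0 ->
  (d1 * (kk * b ^+ 2) <= (kk * a * b + 1) * d2 /\ a * d2 < d1 * b) \/
  (kk * a ^+ 2 * d2 <= d1 * (kk * a * b + 1) /\ d1 * b < a * d2) -> False.
Proof.
case: u => p q /= d1_ge0 d2_gt0 b_gt0 kk_gt0 /andP[p_ge0 p_le] /andP[q_ge0 q_le].
rewrite /cross /= => between.
case=> [[near above] | [near below]].
  by apply: (@no_lattice_slope_above d1 d2 a b kk p q); lia.
(* The second alternative is the first one with the two coordinates swapped. *)
have a_gt0 : 0 < a.
  rewrite -(pmulr_lgt0 _ d2_gt0); apply: le_lt_trans below.
  by rewrite mulr_ge0 // ltW.
have d1_gt0 : 0 < d1.
  have ab1_gt0 : 0 < kk * a * b + 1 by rewrite ltr_wpDl // !mulr_ge0 // ltW.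
  rewrite -(pmulr_lgt0 _ ab1_gt0); apply: lt_le_trans near.
  by rewrite !mulr_gt0 // exprn_gt0.
by apply: (@no_lattice_slope_above d2 d1 b a kk q p); lia.
Qed.

Lemma first_jump_between (d1 d2 a b kk : int) (u : int * int) :
  let m0 := (- d1, - d2) in let mL := (kk * a - d1, kk * b - d2) in
  0 < kk -> in_quadrant u ->
  0 < cross u m0 * cross u (mL - (m0 + u)) ->
  0 <= (mL - (m0 + u)).1 -> 0 <= (mL - (m0 + u)).2 ->
  [/\ 0 <= u.1 <= kk * a, 0 <= u.2 <= kk * b
    & cross u (d1, d2) * cross u (a, b) < 0].
Proof.
case: u => p q /= kk_gt0 /and3P[/= p_ge0 q_ge0 _]; rewrite /cross /=.
set c := (X in 0 < X -> _) => c_gt0 p_le q_le.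
have cE : c = - ((p * d2 - q * d1) * (p * b - q * a)) * kk by rewrite /c; ring.
split; rewrite ?p_ge0 ?q_ge0 /=; try lia.
by move: c_gt0; rewrite cE pmulr_lgt0 // oppr_gt0.
Qed.

Section RotatingJumps.

Variables (m : nat -> int * int) (l : nat).

Hypothesis jump_quadrant : forall i, (i < l)%N -> in_quadrant (jump m i).
Hypothesis turn_sign : forall i, (i.+1 < l)%N ->
  0 < cross (jump m i) (m i) * cross (jump m i.+1) (m i.+1).
Hypothesis rotation_sign : forall i, (i.+1 < l)%N ->
  0 < cross (jump m i) (m i) * cross (jump m i) (jump m i.+1).

Let D0 := cross (jump m 0) (m 0).

Lemma turn_sign_first i : (i.+1 < l)%N ->
  0 < D0 * cross (jump m i.+1) (m i.+1).
Proof.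
elim: i => [|i IHi] lt_il; first exact: turn_sign.
exact: pmul_sign_trans (IHi (ltnW lt_il)) (turn_sign lt_il).
Qed.

Lemma rotation_sign_first i : (i.+1 < l)%N ->
  0 < D0 * cross (jump m 0) (jump m i.+1).
Proof.
elim: i => [|i IHi] lt_il; first exact: rotation_sign.
have lt_i1l := ltnW lt_il.
apply: signed_cross_quadrant_trans (IHi lt_i1l) _; rewrite ?jump_quadrant //.
  exact: ltn_trans lt_il.
exact: pmul_sign_trans (turn_sign_first lt_i1l) (rotation_sign lt_il).
Qed.

Lemma jumps_after_first : (1 < l)%N ->
  [/\ 0 < D0 * cross (jump m 0) (m l - m 1%N),
      0 <= (m l - m 1%N).1 & 0 <= (m l - m 1%N).2].
Proof.
suff after i : (i.+1 < l)%N -> [/\ 0 < D0 * cross (jump m 0) (m i.+2 - m 1%N),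
    0 <= (m i.+2 - m 1%N).1 & 0 <= (m i.+2 - m 1%N).2].
  by case: l after => [|[|n]] // after _; apply: after.
have jumpS j : m j.+2 - m 1%N = (m j.+1 - m 1%N) + jump m j.+1.
  by rewrite /jump [RHS]addrC addrA subrK.
elim: i => [|i IHi] lt_il.
  have /and3P[j1_ge0 j2_ge0 _] := jump_quadrant lt_il.
  by rewrite jumpS subrr add0r; split=> //; apply: rotation_sign_first.
have [cross_gt0 fst_ge0 snd_ge0] := IHi (ltnW lt_il).
have /and3P[j1_ge0 j2_ge0 _] := jump_quadrant lt_il.
rewrite jumpS crossDr mulrDr; split.
- by rewrite addr_gt0 // rotation_sign_first.
- exact: addr_ge0 fst_ge0 j1_ge0.
- exact: addr_ge0 snd_ge0 j2_ge0.
Qed.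

End RotatingJumps.

Lemma cross_signs_of_ray_points (R : realDomainType) (u v m : int * int)
    (s s' t : R) :
  ray_point s' v = ((ray_point s u).1 - t * m.1%:~R,
                    (ray_point s u).2 - t * m.2%:~R) ->
  0 < s -> 0 < s' -> 0 < t -> cross u m != 0 ->
  0 < cross u m * cross v m /\ 0 < cross u m * cross u v.
Proof.
rewrite /ray_point /= => -[e1 e2] s_gt0 s'_gt0 t_gt0 um_neq0.
have {e1}v1E : s' * v.1%:~R = s * u.1%:~R + t * m.1%:~R by lra.
have {e2}v2E : s' * v.2%:~R = s * u.2%:~R + t * m.2%:~R by lra.
have crossE x y : (cross x y)%:~R = x.1%:~R * y.2%:~R - x.2%:~R * y.1%:~R :> R.
  by rewrite /cross intrB !intrM.
have vm : s' * (cross v m)%:~R = s * (cross u m)%:~R :> R.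
  rewrite !crossE.
  have -> : s' * (v.1%:~R * m.2%:~R - v.2%:~R * m.1%:~R) =
      (s' * v.1%:~R) * m.2%:~R - (s' * v.2%:~R) * m.1%:~R :> R by ring.
  by rewrite v1E v2E; ring.
have uv : s' * (cross u v)%:~R = t * (cross u m)%:~R :> R.
  rewrite !crossE.
  have -> : s' * (u.1%:~R * v.2%:~R - u.2%:~R * v.1%:~R) =
      u.1%:~R * (s' * v.2%:~R) - u.2%:~R * (s' * v.1%:~R) :> R by ring.
  by rewrite v1E v2E; ring.
have um2_gt0 : 0 < (cross u m)%:~R ^+ 2 :> R.
  by rewrite exprn_even_gt0 // intr_eq0.
rewrite -!(ltr0z R) !intrM; split.
- by rewrite -(pmulr_rgt0 _ s'_gt0) mulrCA vm mulrCA -expr2 mulr_gt0.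
- by rewrite -(pmulr_rgt0 _ s'_gt0) mulrCA uv mulrCA -expr2 mulr_gt0.
Qed.

Lemma on_wall_ray_point (R : realType) (w : wall) (q : R * R) :
  on_wall w q -> q <> (0, 0) ->
  ~ (q.2 = 0 /\ 0 < q.1) -> ~ (q.1 = 0 /\ 0 < q.2) ->
  in_quadrant (wall_dir w) /\ exists2 s, 0 < s & q = ray_point s (wall_dir w).
Proof.
case: q => x y; rewrite /ray_point.
case: w => [||a b] /= on_w q_neq0 off_x off_y.
- subst y; have [x_lt0|x_gt0|x0] := ltrgtP x 0; last by case: q_neq0; rewrite x0.
    by split=> //; exists (- x); rewrite ?oppr_gt0 // mulr1 mulr0 opprK oppr0.
  by case: off_x.
- subst x; have [y_lt0|y_gt0|y0] := ltrgtP y 0; last by case: q_neq0; rewrite y0.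
    by split=> //; exists (- y); rewrite ?oppr_gt0 // mulr1 mulr0 opprK oppr0.
  by case: off_y.
- case: on_w => /and3P[a_gt0 b_gt0 _] [s [s_ge0 xyE]].
  split; first by apply/and3P; split=> /=; lia.
  exists s => //; rewrite lt_neqAle s_ge0 andbT eq_sym.
  by apply/eqP=> s0; apply: q_neq0; rewrite xyE s0 !mul0r oppr0.
Qed.

Lemma bend_ok_jump (R : realType) (k : fieldType) (l1 l2 : nat)
    (F : nat -> nat -> nat -> ps k (l1 + l2)) (q : R * R)
    (m : int * int) (c : ps k (l1 + l2)) (m' : int * int) (c' : ps k (l1 + l2)) :
  bend_ok F q m c m' c' -> q <> (0, 0) ->
  ~ (q.2 = 0 /\ 0 < q.1) -> ~ (q.1 = 0 /\ 0 < q.2) ->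
  [/\ in_quadrant (m' - m), cross (m' - m) m != 0
    & exists2 s : R, 0 < s & q = ray_point s (m' - m)].
Proof.
case=> w [j [on_w [pair_gt0 j_gt0] m'E _ _]] q_neq0 off_x off_y.
have [dir_quad [s s_gt0 qE]] := on_wall_ray_point on_w q_neq0 off_x off_y.
have jumpE : m' - m = (j%:Z * (wall_dir w).1, j%:Z * (wall_dir w).2).
  by rewrite m'E; congr (_, _); rewrite /= addrAC subrr add0r.
rewrite jumpE; move: dir_quad pair_gt0; rewrite /wall_pair absz_gt0.
case: (wall_dir w) qE => [d1 d2] qE /and3P[d1_ge0 d2_ge0 d_gt0] cross_neq0.
have jz_gt0 : 0 < j%:Z by rewrite ltz_nat.
split.
- by apply/and3P; split; rewrite /= ?mulr_ge0 // -mulrDr mulr_gt0.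
- have -> : cross (j%:Z * d1, j%:Z * d2) m = j%:Z * (d1 * m.2 - d2 * m.1).
    by rewrite /cross /=; ring.
  by rewrite mulf_neq0 // gt_eqF.
- exists (s / j%:R); first by rewrite divr_gt0 // ltr0n.
  rewrite qE /ray_point /= !intrM; congr (- _, - _); field; rewrite pnatr_eq0 -lt0n //.
Qed.

Section BrokenLineBends.

Variables (R : realType) (k : fieldType) (l1 l2 : nat)
  (F : nat -> nat -> nat -> ps k (l1 + l2)) (m0 : int * int) (Q : R * R)
  (beta : R -> R * R) (tau : seq R) (ms : seq (int * int))
  (cs : seq (ps k (l1 + l2))).

Hypothesis beta_broken : broken_line F m0 Q beta tau ms cs.
Hypothesis bends_off_axes : forall i, (i < size tau)%N ->
  ~ ((beta (nth 0 tau i)).2 = 0 /\ 0 < (beta (nth 0 tau i)).1) /\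
  ~ ((beta (nth 0 tau i)).1 = 0 /\ 0 < (beta (nth 0 tau i)).2).

Local Notation m := (nth m0 ms).
Local Notation t i := (nth 0 tau i).

Lemma breakpoint_lt0 i : (i < size tau)%N -> t i < 0.
Proof.
by case: beta_broken => _ _ [_ tau_neg _] _ _ lt_i; apply: (all_nthP 0 tau_neg).
Qed.

Lemma breakpoint_next i : (i.+1 < size tau)%N ->
  beta (t i.+1) = ((beta (t i)).1 - (t i.+1 - t i) * (m i.+1).1%:~R,
                   (beta (t i)).2 - (t i.+1 - t i) * (m i.+1).2%:~R).
Proof.
move=> lt_i1; case: beta_broken => _ _ [tau_sorted _ _] piece _.
have t_lt : t i < t i.+1 by apply: (sortedP 0 tau_sorted).
apply: piece (ltnW lt_i1) _ _; split=> /=.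
- by rewrite ltW ?breakpoint_lt0.
- by right; rewrite ltW.
- by right.
- by rewrite ltW ?breakpoint_lt0 // ltnW.
- by right.
- by right; rewrite ltW.
Qed.

Lemma bend_jump i : (i < size tau)%N ->
  [/\ in_quadrant (jump m i), cross (jump m i) (m i) != 0
    & exists2 s : R, 0 < s & beta (t i) = ray_point s (jump m i)].
Proof.
move=> lt_i; case: beta_broken => _ _ _ _ [beta_neq0 bend].
have [off_x off_y] := bends_off_axes lt_i.
apply: bend_ok_jump (bend i lt_i) _ off_x off_y.
by apply: beta_neq0; rewrite ltW ?breakpoint_lt0.
Qed.

Lemma bend_turns i : (i.+1 < size tau)%N ->
  0 < cross (jump m i) (m i) * cross (jump m i.+1) (m i.+1) /\
  0 < cross (jump m i) (m i) * cross (jump m i) (jump m i.+1).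
Proof.
move=> lt_i1; have [_ cross_neq0 [s s_gt0 beta_i]] := bend_jump (ltnW lt_i1).
have [_ _ [s' s'_gt0 beta_i1]] := bend_jump lt_i1.
have t_gt0 : 0 < t i.+1 - t i.
  case: beta_broken => _ _ [tau_sorted _ _] _ _.
  by rewrite subr_gt0 (sortedP 0 tau_sorted).
have cross_next : cross (jump m i) (m i.+1) = cross (jump m i) (m i).
  by rewrite -[m i.+1](subrK (m i)) crossDr crossvv add0r.
have := breakpoint_next lt_i1; rewrite beta_i beta_i1 => segment.
rewrite -cross_next in cross_neq0 *.
exact: cross_signs_of_ray_points segment s_gt0 s'_gt0 t_gt0 cross_neq0.
Qed.

Lemma broken_line_two_bends : (1 < size tau)%N ->
  [/\ in_quadrant (jump m 0),
      0 < cross (jump m 0) (m 0) * cross (jump m 0) (m (size tau) - m 1%N),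
      0 <= (m (size tau) - m 1%N).1 & 0 <= (m (size tau) - m 1%N).2].
Proof.
move=> two_bends.
have quad i : (i < size tau)%N -> in_quadrant (jump m i) by case/bend_jump.
have turn i (lt_i : (i.+1 < size tau)%N) := proj1 (bend_turns lt_i).
have rot i (lt_i : (i.+1 < size tau)%N) := proj2 (bend_turns lt_i).
have [] := jumps_after_first quad turn rot two_bends.
by split; rewrite ?quad // ltnW.
Qed.

End BrokenLineBends.

Theorem lemma5p11 (R : realType) (k : fieldType) (hk : [pchar k] =i pred0)
  (l1 l2 : nat) (hl1 : (0 < l1)%N) (hl2 : (0 < l2)%N)
  (F : nat -> nat -> nat -> ps k (l1 + l2)) (HF : is_Scat F)
  (d1 d2 a b kk : nat) (hab : coprime a b) (hkk : (1 <= kk)%N)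
  (hb : (0 < b)%N) (hd2 : (0 < d2)%N) :
  ((d1%:R / d2%:R <= (kk * a * b + 1)%:R / (kk * b ^ 2)%:R :> rat) /\
   (a%:R / b%:R < d1%:R / d2%:R :> rat)) \/
  (((kk * a ^ 2)%:R / (kk * a * b + 1)%:R <= d1%:R / d2%:R :> rat) /\
   (d1%:R / d2%:R < a%:R / b%:R :> rat)) ->
  one_bending R F d1 d2 a b kk.
Proof.
move=> slopes Q beta tau ms cs beta_broken m_last off_axes.
have {slopes} slopes :
    (d1 * (kk * b ^ 2) <= (kk * a * b + 1) * d2 /\ a * d2 < d1 * b)%N \/
    (kk * a ^ 2 * d2 <= d1 * (kk * a * b + 1) /\ d1 * b < a * d2)%N.
  have kb2_gt0 : (0 < kk * b ^ 2)%N by rewrite muln_gt0 expn_gt0 hb hkk.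
  by move: slopes; rewrite !ler_nat_frac ?ltr_nat_frac ?addn1.
have [_ [size_ms _ m_first _] _ _ _] := beta_broken.
set m := nth _ ms in m_first m_last *.
move: m_last; rewrite (last_nth (- d1%:Z, - d2%:Z)) size_ms /= -/m => m_last.
case: (ltngtP (size tau) 1) => [|two_bends|//].
  by rewrite ltnS leqn0 => /eqP tau0; move: m_last; rewrite tau0 m_first => -[_]; lia.
have [quad0 cross_pos gap1_ge0 gap2_ge0] :=
  broken_line_two_bends beta_broken off_axes two_bends.
have m1E : m 1%N = m 0%N + jump m 0 by rewrite /jump addrC subrK.
rewrite -/m m_last m1E m_first !PoszM in cross_pos gap1_ge0 gap2_ge0.
have kk_gt0 : 0 < kk%:Z by rewrite ltz_nat.
have [u1 u2 sep] := first_jump_between kk_gt0 quad0 cross_pos gap1_ge0 gap2_ge0.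
exfalso; apply: (no_lattice_vector_between _ _ _ _ u1 u2 sep); lia.
Qed.
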